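(* Let $K$ be an infinite subset of $\mathbb N$. Then there is an unbounded, concave and slowly varying modulus $f\colon[0,\infty)\to[0,\infty)$ such that $d^f(K)=1$.
   Context: A modulus is a function $f\colon[0,\infty)\to[0,\infty)$ such that $f(x)=0$ iff $x=0$, $f(x+y)\le f(x)+f(y)$ for all $x,y\ge0$, $f$ is increasing, and $f$ is continuous. A modulus $f$ is slowly varying if $\lim_{x\to\infty}\frac{f(ax)}{f(x)}=1$ for every $a>0$. For an unbounded modulus $f$ and $K\subseteq\mathbb N$, the $f$-density is $d^f(K)=\lim_{n\to\infty}\frac{f(|\{k\le n:k\in K\}|)}{f(n)}$ (when the limit exists). *)

From Stdlib Require Import Reals.
From Coquelicot Require Import Coquelicot.
Open Scope R_scope.

(* A modulus f : [0,oo) -> [0,oo), represented as f : R -> R whose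
   values outside [0,oo) are irrelevant. *)
Definition is_modulus (f : R -> R) : Prop :=
  (forall x, 0 <= x -> 0 <= f x) /\
  (forall x, 0 <= x -> (f x = 0 <-> x = 0)) /\
  (forall x y, 0 <= x -> 0 <= y -> f (x + y) <= f x + f y) /\
  (forall x y, 0 <= x -> x < y -> f x < f y) /\
  (forall x, 0 <= x ->
     filterlim f (within (fun y => 0 <= y) (locally x)) (locally (f x))).

Definition unbounded_on_nonneg (f : R -> R) : Prop :=
  forall M, exists x, 0 <= x /\ M < f x.

Definition concave_on_nonneg (f : R -> R) : Prop :=
  forall x y t, 0 <= x -> 0 <= y -> 0 <= t <= 1 ->
    t * f x + (1 - t) * f y <= f (t * x + (1 - t) * y).

Definition slowly_varying (f : R -> R) : Prop :=
  forall a, 0 < a -> is_lim (fun x => f (a * x) / f x) p_infty 1.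

Fixpoint count_upto (K : nat -> bool) (n : nat) : nat :=
  match n with
  | O => if K O then 1%nat else 0%nat
  | S m => (count_upto K m + (if K (S m) then 1 else 0))%nat
  end.

Definition f_density_is (f : R -> R) (K : nat -> bool) (l : R) : Prop :=
  is_lim_seq (fun n => f (INR (count_upto K n)) / f (INR n)) l.

Definition infinite_set (K : nat -> bool) : Prop :=
  forall N, exists k, (N <= k)%nat /\ K k = true.

From Stdlib Require Import Reals Lra Lia ZArith ConstructiveEpsilon.
From Coquelicot Require Import Coquelicot.
Open Scope R_scope.

(* Let h be the piecewise linear function through the points (J i, i), where
   0 = J 0 < J 1 < ... have nondecreasing gaps: h is concave, increasing and
   Lipschitz.  Then f(x) = h(ln(1 + x)) is a concave modulus, and it is slowly
   varying because ln(1 + a x) - ln(1 + x) stays bounded while f tends to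
   infinity.  Since K is infinite, the knots can be chosen so sparse that
   |K ∩ [0, m]| >= exp (J (i + 1)) as soon as m >= J (i + 2); then ln(1 + n)
   and ln(1 + |K ∩ [0, n]|) are at most two blocks apart, so f(n) and
   f(|K ∩ [0, n]|) differ by a bounded amount and their ratio tends to 1. *)

Lemma filterlim_ratio_bounded_diff {T : Type} (F : (T -> Prop) -> Prop) {FF : Filter F}
    (u v : T -> R) (C : R) :
  F (fun x => Rabs (u x - v x) <= C) -> filterlim v F (Rbar_locally p_infty) ->
  filterlim (fun x => u x / v x) F (locally 1).
Proof.
  intros Hdiff Hv. apply filterlim_locally. intros eps.
  pose proof (cond_pos eps) as Heps.
  assert (Hbig : F (fun x => Rmax (C / eps) 0 < v x))
    by (apply Hv; exists (Rmax (C / eps) 0); auto).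
  refine (filter_imp _ _ _ (filter_and _ _ Hdiff Hbig)).
  intros x [Hd Hx]. change (Rabs (u x / v x - 1) < eps).
  pose proof (Rmax_l (C / eps) 0). pose proof (Rmax_r (C / eps) 0).
  replace (u x / v x - 1) with ((u x - v x) / v x) by (field; lra).
  rewrite Rabs_div, (Rabs_pos_eq (v x)) by lra.
  rewrite Rlt_div_l by lra.
  apply Rle_lt_trans with C; [exact Hd|].
  apply Rle_lt_trans with (C / eps * eps); [right; field; lra|].
  rewrite (Rmult_comm eps). apply Rmult_lt_compat_r; lra.
Qed.

Lemma concave_on_nonneg_subadditive (f : R -> R) :
  concave_on_nonneg f -> 0 <= f 0 ->
  forall x y, 0 <= x -> 0 <= y -> f (x + y) <= f x + f y.
Proof.
  intros Hf Hf0 x y Hx Hy.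
  destruct (Req_dec (x + y) 0) as [Hs|Hs].
  { replace x with 0 by lra. replace y with 0 by lra. rewrite Rplus_0_r. lra. }
  set (t := x / (x + y)).
  assert (Ht : 0 <= t <= 1).
  { unfold t. split; [apply Rdiv_le_0_compat; lra|].
    rewrite <- Rdiv_le_1; lra. }
  pose proof (Hf (x + y) 0 t ltac:(lra) ltac:(lra) Ht) as Hx'.
  pose proof (Hf (x + y) 0 (1 - t) ltac:(lra) ltac:(lra) ltac:(lra)) as Hy'.
  replace (t * (x + y) + (1 - t) * 0) with x in Hx' by (unfold t; field; lra).
  replace ((1 - t) * (x + y) + (1 - (1 - t)) * 0) with y in Hy' by (unfold t; field; lra).
  nra.
Qed.

Definition monotone_Lipschitz (f : R -> R) (L : R) : Prop :=
  forall x y, 0 <= x <= y -> 0 <= f y - f x <= L * (y - x).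

Lemma monotone_Lipschitz_nonneg (f : R -> R) (L : R) : monotone_Lipschitz f L -> 0 <= L.
Proof. intros Hf. pose proof (Hf 0 1 ltac:(lra)). lra. Qed.

Lemma monotone_Lipschitz_dist (f : R -> R) (L : R) :
  monotone_Lipschitz f L ->
  forall x y, 0 <= x -> 0 <= y -> Rabs (f y - f x) <= L * Rabs (y - x).
Proof.
  intros Hf x y Hx Hy. destruct (Rle_dec x y).
  - pose proof (Hf x y ltac:(lra)). rewrite !Rabs_pos_eq by lra. lra.
  - pose proof (Hf y x ltac:(lra)).
    rewrite Rabs_minus_sym, (Rabs_minus_sym y), !Rabs_pos_eq by lra. lra.
Qed.

Lemma modulus_of_concave_Lipschitz (f : R -> R) (L : R) :
  f 0 = 0 -> (forall x y, 0 <= x -> x < y -> f x < f y) ->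
  monotone_Lipschitz f L -> concave_on_nonneg f -> is_modulus f.
Proof.
  intros Hf0 Hlt Hlip Hconc.
  assert (Hpos : forall x, 0 < x -> 0 < f x)
    by (intros x Hx; rewrite <- Hf0; apply Hlt; lra).
  pose proof (monotone_Lipschitz_nonneg f L Hlip) as HL.
  split; [|split; [|split; [|split]]].
  - intros x Hx. destruct (Req_dec x 0) as [->|]; [lra|]. apply Rlt_le, Hpos. lra.
  - intros x Hx. split; [|intros ->; exact Hf0].
    intros Hfx. destruct (Req_dec x 0); [assumption|].
    pose proof (Hpos x ltac:(lra)). lra.
  - apply concave_on_nonneg_subadditive; [exact Hconc | lra].
  - exact Hlt.
  - intros x Hx. apply filterlim_locally. intros eps.
    pose proof (cond_pos eps).
    assert (Hd : 0 < eps / (L + 1)) by (apply Rdiv_lt_0_compat; lra).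
    exists (mkposreal _ Hd). intros y Hy Hy0.
    change (Rabs (y - x) < eps / (L + 1)) in Hy. change (Rabs (f y - f x) < eps).
    pose proof (monotone_Lipschitz_dist f L Hlip x y Hx Hy0).
    pose proof (Rabs_pos (y - x)).
    apply Rle_lt_trans with (L * Rabs (y - x)); [assumption|].
    apply Rle_lt_trans with ((L + 1) * Rabs (y - x)); [nra|].
    rewrite Rmult_comm, Rlt_div_r by lra. exact Hy.
Qed.

Lemma slowly_varying_of_bounded_dilation (f : R -> R) :
  filterlim f (Rbar_locally p_infty) (Rbar_locally p_infty) ->
  (forall a, 0 < a -> exists C, forall x, 0 <= x -> Rabs (f (a * x) - f x) <= C) ->
  slowly_varying f.
Proof.
  intros Hf Hdil a Ha. destruct (Hdil a Ha) as [C HC].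
  apply (filterlim_ratio_bounded_diff _ _ _ C); [|exact Hf].
  exists 0. intros x Hx. apply HC. lra.
Qed.

Lemma ln_le_sub1 (w : R) : 0 < w -> ln w <= w - 1.
Proof.
  intros Hw. rewrite <- (ln_exp (w - 1)).
  apply ln_le; [exact Hw|]. pose proof (exp_ineq1_le (w - 1)). lra.
Qed.

Lemma ln_concave (u v t : R) : 0 < u -> 0 < v -> 0 <= t <= 1 ->
  t * ln u + (1 - t) * ln v <= ln (t * u + (1 - t) * v).
Proof.
  intros Hu Hv Ht. set (m := t * u + (1 - t) * v).
  assert (Hm : 0 < m) by (unfold m; nra).
  (* tangent line of [ln] at [m] *)
  assert (Htan : forall z, 0 < z -> ln z <= ln m + z / m - 1).
  { intros z Hz. pose proof (ln_le_sub1 (z / m) ltac:(apply Rdiv_lt_0_compat; lra)) as W.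
    rewrite ln_div in W by lra. lra. }
  pose proof (Htan u Hu). pose proof (Htan v Hv).
  assert (t * (u / m) + (1 - t) * (v / m) = 1) by (unfold m in *; field; lra).
  nra.
Qed.

Lemma ln1p_nonneg (x : R) : 0 <= x -> 0 <= ln (1 + x).
Proof. intros Hx. rewrite <- ln_1. apply ln_le; lra. Qed.

Lemma ln1p_monotone_Lipschitz : monotone_Lipschitz (fun x => ln (1 + x)) 1.
Proof.
  intros x y Hxy. split.
  - pose proof (ln_le (1 + x) (1 + y) ltac:(lra) ltac:(lra)). lra.
  - rewrite <- ln_div by lra.
    pose proof (ln_le_sub1 ((1 + y) / (1 + x)) ltac:(apply Rdiv_lt_0_compat; lra)).
    assert ((1 + y) / (1 + x) - 1 <= y - x); [|lra].
    replace ((1 + y) / (1 + x) - 1) with ((y - x) / (1 + x)) by (field; lra).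
    rewrite <- Rdiv_1_r. apply Rmult_le_compat_l; [lra|].
    apply Rinv_le_contravar; lra.
Qed.

Lemma ln1p_dilation (a x : R) : 0 < a -> 0 <= x ->
  Rabs (ln (1 + a * x) - ln (1 + x)) <= Rabs (ln a).
Proof.
  intros Ha Hx. destruct (Rle_dec 1 a) as [Ha1|Ha1].
  - assert (0 <= ln a) by (rewrite <- ln_1; apply ln_le; lra).
    assert (ln (1 + x) <= ln (1 + a * x)) by (apply ln_le; nra).
    assert (ln (1 + a * x) <= ln a + ln (1 + x))
      by (rewrite <- ln_mult by lra; apply ln_le; nra).
    rewrite !Rabs_pos_eq; lra.
  - assert (ln a <= 0) by (rewrite <- ln_1; apply ln_le; lra).
    assert (ln (1 + a * x) <= ln (1 + x)) by (apply ln_le; nra).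
    assert (ln (1 + x) <= ln (/ a) + ln (1 + a * x)).
    { rewrite <- ln_mult by (try apply Rinv_0_lt_compat; nra). apply ln_le; [lra|].
      replace (/ a * (1 + a * x)) with (/ a + x) by (field; lra).
      pose proof (Rinv_le_contravar a 1 Ha ltac:(lra)). rewrite Rinv_1 in *. lra. }
    rewrite ln_Rinv in * by lra.
    rewrite Rabs_minus_sym, (Rabs_pos_eq (_ - _)), Rabs_left1; lra.
Qed.

Definition comp_ln1p (h : R -> R) (x : R) : R := h (ln (1 + x)).

Section ComposeLn1p.

Variables (h : R -> R) (L : R).
Hypothesis h_lt : forall x y, 0 <= x -> x < y -> h x < h y.
Hypothesis h_Lipschitz : monotone_Lipschitz h L.
Hypothesis h_concave : concave_on_nonneg h.
Hypothesis h_unbounded : unbounded_on_nonneg h.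

Lemma comp_ln1p_0 : h 0 = 0 -> comp_ln1p h 0 = 0.
Proof. unfold comp_ln1p. rewrite Rplus_0_r, ln_1. easy. Qed.

Lemma comp_ln1p_lt x y : 0 <= x -> x < y -> comp_ln1p h x < comp_ln1p h y.
Proof.
  intros Hx Hxy. apply h_lt; [apply ln1p_nonneg, Hx|]. apply ln_increasing; lra.
Qed.

Lemma comp_ln1p_monotone_Lipschitz : monotone_Lipschitz (comp_ln1p h) L.
Proof.
  intros x y Hxy. unfold comp_ln1p.
  pose proof (ln1p_monotone_Lipschitz x y Hxy).
  pose proof (h_Lipschitz (ln (1 + x)) (ln (1 + y))
                ltac:(pose proof (ln1p_nonneg x); lra)).
  pose proof (monotone_Lipschitz_nonneg h L h_Lipschitz). nra.
Qed.

Lemma comp_ln1p_concave : concave_on_nonneg (comp_ln1p h).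
Proof.
  intros x y t Hx Hy Ht. unfold comp_ln1p.
  pose proof (ln_concave (1 + x) (1 + y) t ltac:(lra) ltac:(lra) Ht) as Hln.
  replace (t * (1 + x) + (1 - t) * (1 + y)) with (1 + (t * x + (1 - t) * y)) in Hln by ring.
  pose proof (ln1p_nonneg x Hx). pose proof (ln1p_nonneg y Hy).
  assert (Hcomb : 0 <= t * ln (1 + x) + (1 - t) * ln (1 + y))
    by (apply Rplus_le_le_0_compat; apply Rmult_le_pos; lra).
  eapply Rle_trans; [apply h_concave; assumption|].
  pose proof (h_Lipschitz _ _ (conj Hcomb Hln)). lra.
Qed.

Lemma comp_ln1p_exp_sub1 X : comp_ln1p h (exp X - 1) = h X.
Proof. unfold comp_ln1p. now replace (1 + (exp X - 1)) with (exp X) by ring; rewrite ln_exp. Qed.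

Lemma comp_ln1p_unbounded : unbounded_on_nonneg (comp_ln1p h).
Proof.
  intros M. destruct (h_unbounded M) as [X [HX HM]].
  exists (exp X - 1). rewrite comp_ln1p_exp_sub1.
  pose proof (exp_ineq1_le X). split; lra.
Qed.

Lemma comp_ln1p_tends_infty :
  filterlim (comp_ln1p h) (Rbar_locally p_infty) (Rbar_locally p_infty).
Proof.
  intros P [M HP]. destruct (h_unbounded M) as [X [HX HM]].
  exists (exp X - 1). intros x Hx. apply HP.
  pose proof (exp_ineq1_le X).
  pose proof (comp_ln1p_monotone_Lipschitz (exp X - 1) x ltac:(lra)).
  rewrite comp_ln1p_exp_sub1 in *. lra.
Qed.

Lemma comp_ln1p_modulus : h 0 = 0 -> is_modulus (comp_ln1p h).
Proof.
  intros h_0.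
  exact (modulus_of_concave_Lipschitz _ L (comp_ln1p_0 h_0) comp_ln1p_lt
           comp_ln1p_monotone_Lipschitz comp_ln1p_concave).
Qed.

Lemma comp_ln1p_slowly_varying : slowly_varying (comp_ln1p h).
Proof.
  apply slowly_varying_of_bounded_dilation; [exact comp_ln1p_tends_infty|].
  intros a Ha. exists (L * Rabs (ln a)). intros x Hx.
  eapply Rle_trans.
  - apply (monotone_Lipschitz_dist h L h_Lipschitz); apply ln1p_nonneg; nra.
  - apply Rmult_le_compat_l; [exact (monotone_Lipschitz_nonneg h L h_Lipschitz)|].
    apply ln1p_dilation; assumption.
Qed.

End ComposeLn1p.

Section CountingFunction.

Variable K : nat -> bool.

Lemma count_upto_le_S n : (count_upto K n <= S n)%nat.
Proof. induction n as [|n IH]; simpl; [destruct (K 0%nat)|destruct (K (S n))]; lia. Qed.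

Lemma count_upto_monotone n m : (n <= m)%nat -> (count_upto K n <= count_upto K m)%nat.
Proof. induction 1 as [|m _ IH]; simpl; lia. Qed.

Hypothesis K_infinite : infinite_set K.

Lemma count_upto_unbounded M : exists n, (M <= count_upto K n)%nat.
Proof.
  induction M as [|M [n Hn]]; [exists 0%nat; lia|].
  destruct (K_infinite (S n)) as [[|k] [Hk HKk]]; [lia|].
  exists (S k). simpl. rewrite HKk.
  pose proof (count_upto_monotone n k ltac:(lia)). lia.
Qed.

Lemma exists_count_upto_ge r : exists n, r <= INR (count_upto K n).
Proof.
  destruct (INR_unbounded r) as [M HM].
  destruct (count_upto_unbounded M) as [n Hn].
  exists n. apply le_INR in Hn. lra.
Qed.

Definition count_threshold (r : R) : nat :=
  proj1_sig (constructive_indefinite_ground_description_nat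
               (fun n => r <= INR (count_upto K n)) (fun n => Rle_dec _ _)
               (exists_count_upto_ge r)).

Lemma count_threshold_spec r m :
  (count_threshold r <= m)%nat -> r <= INR (count_upto K m).
Proof.
  unfold count_threshold.
  destruct (constructive_indefinite_ground_description_nat _ _ _) as [n Hn]. simpl.
  intros Hm. apply count_upto_monotone, le_INR in Hm. lra.
Qed.

End CountingFunction.

Lemma le_INR_up_to_nat (t : R) : t <= INR (Z.to_nat (up t)).
Proof.
  destruct (archimed t) as [Hup _].
  destruct (Z.lt_ge_cases (up t) 0) as [Hneg|Hnonneg].
  - replace (Z.to_nat (up t)) with 0%nat by lia. apply IZR_lt in Hneg. simpl. lra.
  - rewrite INR_IZR_INZ, Z2Nat.id by exact Hnonneg. lra.
Qed.

Lemma Rmin_l_incr (x y B : R) : x <= y -> 0 <= Rmin y B - Rmin x B <= y - x.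
Proof. intros. unfold Rmin. destruct (Rle_dec y B), (Rle_dec x B); lra. Qed.

Lemma Rmin_l_concave (x y t B : R) : 0 <= t <= 1 ->
  t * Rmin x B + (1 - t) * Rmin y B <= Rmin (t * x + (1 - t) * y) B.
Proof.
  intros. unfold Rmin.
  destruct (Rle_dec x B), (Rle_dec y B), (Rle_dec (t * x + (1 - t) * y) B); nra.
Qed.

Section Interpolation.

Variable J : nat -> nat.
Hypothesis J_lt_S : forall i, (J i < J (S i))%nat.
Hypothesis J_convex : forall i, (J (S i) + J (S i) <= J i + J (S (S i)))%nat.

Lemma J_monotone i k : (i <= k)%nat -> (J i <= J k)%nat.
Proof. induction 1 as [|k _ IH]; [lia|]. pose proof (J_lt_S k). lia. Qed.

Lemma le_J i : (i <= J i)%nat.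
Proof. induction i as [|i IH]; [lia|]. pose proof (J_lt_S i). lia. Qed.

Definition slope (i : nat) : R := / (INR (J (S i)) - INR (J i)).

Lemma knot_gap_ge_1 i : 1 <= INR (J (S i)) - INR (J i).
Proof.
  pose proof (J_lt_S i). rewrite <- minus_INR by lia.
  apply (le_INR 1). lia.
Qed.

Lemma slope_pos i : 0 < slope i.
Proof. pose proof (knot_gap_ge_1 i). apply Rinv_0_lt_compat. lra. Qed.

Lemma slope_S_le i : slope (S i) <= slope i.
Proof.
  pose proof (knot_gap_ge_1 i). pose proof (J_convex i).
  pose proof (J_lt_S i). pose proof (J_lt_S (S i)).
  unfold slope. apply Rinv_le_contravar; [lra|].
  rewrite <- !minus_INR by lia. apply le_INR. lia.
Qed.

(* [interp_upto n] is piecewise linear with slope [slope k] on [[J k, J (S k)]]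
   for [k < n] and slope [slope n] beyond [J n]; hence [interp] is the piecewise
   linear function through the points [(J i, i)]. *)
Fixpoint interp_kinks (n : nat) (t : R) : R :=
  match n with
  | O => 0
  | S m => interp_kinks m t + (slope m - slope (S m)) * Rmin t (INR (J (S m)))
  end.

Definition interp_upto (n : nat) (t : R) : R := interp_kinks n t + slope n * t.

Definition interp (t : R) : R := interp_upto (Z.to_nat (up t)) t.

Lemma interp_upto_S n t : t <= INR (J (S n)) -> interp_upto (S n) t = interp_upto n t.
Proof. intros Ht. unfold interp_upto. simpl. rewrite Rmin_left by exact Ht. ring. Qed.

Lemma interp_upto_stable n m t :
  t <= INR (J (S n)) -> (n <= m)%nat -> interp_upto m t = interp_upto n t.
Proof.
  intros Ht. induction 1 as [|m Hm IH]; [reflexivity|].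
  rewrite interp_upto_S; [exact IH|].
  apply Rle_trans with (INR (J (S n))); [exact Ht|].
  apply le_INR, J_monotone. lia.
Qed.

Lemma interp_eq_upto n t : t <= INR (J (S n)) -> interp t = interp_upto n t.
Proof.
  intros Ht. unfold interp. set (N := Z.to_nat (up t)).
  assert (HN : t <= INR (J (S N))).
  { apply Rle_trans with (INR N); [apply le_INR_up_to_nat|].
    apply le_INR. pose proof (le_J (S N)). lia. }
  rewrite <- (interp_upto_stable N (Nat.max N n) t HN) by lia.
  apply interp_upto_stable; [exact Ht | lia].
Qed.

Lemma exists_knot_ge t : exists n, t <= INR (J (S n)).
Proof.
  destruct (INR_unbounded t) as [n Hn]. exists n.
  apply Rle_trans with (INR n); [lra|]. apply le_INR. pose proof (le_J (S n)). lia.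
Qed.

Lemma interp_kinks_incr n x y : x <= y ->
  0 <= interp_kinks n y - interp_kinks n x <= (slope 0 - slope n) * (y - x).
Proof.
  intros Hxy. induction n as [|n IH]; simpl; [lra|].
  pose proof (Rmin_l_incr x y (INR (J (S n))) Hxy).
  pose proof (slope_S_le n).
  set (d := Rmin y (INR (J (S n))) - Rmin x (INR (J (S n)))) in *.
  assert (0 <= (slope n - slope (S n)) * d <= (slope n - slope (S n)) * (y - x))
    by (split; [apply Rmult_le_pos | apply Rmult_le_compat_l]; lra).
  unfold d in *. nra.
Qed.

Lemma interp_upto_incr n x y : x <= y ->
  slope n * (y - x) <= interp_upto n y - interp_upto n x <= slope 0 * (y - x).
Proof. intros Hxy. pose proof (interp_kinks_incr n x y Hxy). unfold interp_upto. nra. Qed.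

Lemma interp_incr x y : x <= y -> 0 <= interp y - interp x <= slope 0 * (y - x).
Proof.
  intros Hxy. destruct (exists_knot_ge y) as [n Hn].
  rewrite (interp_eq_upto n y), (interp_eq_upto n x) by lra.
  pose proof (interp_upto_incr n x y Hxy). pose proof (slope_pos n). nra.
Qed.

Lemma interp_monotone_Lipschitz : monotone_Lipschitz interp (slope 0).
Proof. intros x y Hxy. apply interp_incr. lra. Qed.

Lemma interp_lt x y : x < y -> interp x < interp y.
Proof.
  intros Hxy. destruct (exists_knot_ge y) as [n Hn].
  rewrite (interp_eq_upto n y), (interp_eq_upto n x) by lra.
  pose proof (interp_upto_incr n x y (Rlt_le _ _ Hxy)).
  pose proof (Rmult_lt_0_compat _ _ (slope_pos n) (proj2 (Rlt_0_minus _ _) Hxy)). lra.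
Qed.

Lemma interp_kinks_concave n x y t : 0 <= t <= 1 ->
  t * interp_kinks n x + (1 - t) * interp_kinks n y <= interp_kinks n (t * x + (1 - t) * y).
Proof.
  intros Ht. induction n as [|n IH]; simpl; [lra|].
  pose proof (Rmin_l_concave x y t (INR (J (S n))) Ht).
  pose proof (slope_S_le n).
  set (c := slope n - slope (S n)) in *.
  assert (c * (t * Rmin x (INR (J (S n))) + (1 - t) * Rmin y (INR (J (S n))))
          <= c * Rmin (t * x + (1 - t) * y) (INR (J (S n))))
    by (apply Rmult_le_compat_l; unfold c; lra).
  nra.
Qed.

Lemma interp_concave : concave_on_nonneg interp.
Proof.
  intros x y t _ _ Ht. destruct (exists_knot_ge (Rmax x y)) as [n Hn].
  pose proof (Rmax_l x y). pose proof (Rmax_r x y).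
  rewrite (interp_eq_upto n x), (interp_eq_upto n y), (interp_eq_upto n (t * x + (1 - t) * y))
    by nra.
  pose proof (interp_kinks_concave n x y t Ht). unfold interp_upto. nra.
Qed.

Lemma interp_kinks_const n x y :
  INR (J n) <= x -> INR (J n) <= y -> interp_kinks n x = interp_kinks n y.
Proof.
  induction n as [|n IH]; intros Hx Hy; simpl; [reflexivity|].
  assert (INR (J n) <= INR (J (S n))) by (apply le_INR, Nat.lt_le_incl, J_lt_S).
  rewrite IH, !Rmin_right by lra. reflexivity.
Qed.

Hypothesis J_0 : J 0%nat = 0%nat.

Lemma interp_knot_S i : interp (INR (J (S i))) = interp (INR (J i)) + 1.
Proof.
  pose proof (knot_gap_ge_1 i).
  rewrite !(interp_eq_upto i) by lra. unfold interp_upto, slope.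
  rewrite (interp_kinks_const i (INR (J (S i))) (INR (J i))) by lra.
  field. lra.
Qed.

Lemma interp_knot i : interp (INR (J i)) = INR i.
Proof.
  induction i as [|i IH].
  - rewrite J_0. simpl. rewrite (interp_eq_upto 0) by (apply pos_INR).
    unfold interp_upto. simpl. ring.
  - rewrite interp_knot_S, IH, S_INR. reflexivity.
Qed.

Lemma interp_0 : interp 0 = 0.
Proof. pose proof (interp_knot 0) as H0. rewrite J_0 in H0. exact H0. Qed.

Lemma interp_unbounded : unbounded_on_nonneg interp.
Proof.
  intros M. destruct (INR_unbounded M) as [i Hi].
  exists (INR (J i)). rewrite interp_knot. split; [apply pos_INR | lra].
Qed.

Lemma knot_interval t : 0 <= t -> exists i, INR (J i) <= t < INR (J (S i)).
Proof.
  intros Ht. destruct (exists_knot_ge (t + 1)) as [n Hn].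
  assert (Hbelow : t < INR (J (S n))) by lra. clear Hn.
  induction (S n) as [|m IH].
  - rewrite J_0 in Hbelow. simpl in Hbelow. lra.
  - destruct (Rlt_le_dec t (INR (J m))) as [Hm|Hm]; [exact (IH Hm)|].
    exists m. lra.
Qed.

Lemma interp_le_add_2 t T : 0 <= t ->
  (forall i, INR (J (S (S i))) <= T -> INR (J (S i)) <= t) -> interp T <= interp t + 2.
Proof.
  intros Ht Hknots. destruct (knot_interval t Ht) as [i [Hi HSi]].
  assert (HT : T < INR (J (S (S i)))).
  { destruct (Rlt_le_dec T (INR (J (S (S i))))) as [|Hle]; [assumption|].
    specialize (Hknots i Hle). lra. }
  pose proof (interp_incr T (INR (J (S (S i)))) ltac:(lra)).
  pose proof (interp_incr (INR (J i)) t Hi).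
  rewrite !interp_knot, !S_INR in *. lra.
Qed.

Variable K : nat -> bool.
Hypothesis J_fast : forall i m,
  (J (S (S i)) <= m)%nat -> exp (INR (J (S i))) <= INR (count_upto K m).

Lemma interp_ln1p_count_close n :
  Rabs (comp_ln1p interp (INR (count_upto K n)) - comp_ln1p interp (INR n)) <= slope 0 + 2.
Proof.
  pose proof (comp_ln1p_monotone_Lipschitz interp (slope 0) interp_monotone_Lipschitz) as Hf.
  set (f := comp_ln1p interp) in *. set (c := count_upto K n).
  assert (Hc : INR c <= INR n + 1) by (rewrite <- S_INR; apply le_INR, count_upto_le_S).
  pose proof (pos_INR n). pose proof (pos_INR c). pose proof (slope_pos 0).
  assert (Hup : f (INR c) <= f (INR n) + slope 0).
  { pose proof (Hf (INR c) (INR n + 1) ltac:(lra)).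
    pose proof (Hf (INR n) (INR n + 1) ltac:(lra)). nra. }
  assert (Hdown : f (INR n) <= f (INR c) + 2).
  { apply interp_le_add_2; [apply ln1p_nonneg, pos_INR|].
    intros i Hi.
    assert (Hm : (J (S (S i)) <= n)%nat).
    { apply INR_le. apply Rle_trans with (ln (1 + INR n)); [exact Hi|].
      pose proof (ln_le_sub1 (1 + INR n) ltac:(lra)). lra. }
    pose proof (J_fast i n Hm) as Hexp. fold c in Hexp.
    rewrite <- (ln_exp (INR (J (S i)))). apply ln_le; [apply exp_pos | lra]. }
  apply Rabs_le. lra.
Qed.

Lemma interp_ln1p_density : f_density_is (comp_ln1p interp) K 1.
Proof.
  apply (filterlim_ratio_bounded_diff _ _ _ (slope 0 + 2)).
  - exists 0%nat. intros n _. apply interp_ln1p_count_close.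
  - exact (filterlim_comp _ _ _ INR (comp_ln1p interp) _ _ _ is_lim_seq_INR
             (comp_ln1p_tends_infty interp (slope 0) interp_monotone_Lipschitz interp_unbounded)).
Qed.

End Interpolation.

Theorem lemma2p5 (K : nat -> bool) (HK : infinite_set K) :
  exists f : R -> R,
    is_modulus f /\ unbounded_on_nonneg f /\ concave_on_nonneg f /\
    slowly_varying f /\ f_density_is f K 1.
Proof.
  set (step := fun b => Nat.max (2 * b + 1) (count_threshold K HK (exp (INR b)))).
  set (J := fun i => Nat.iter i step 0%nat).
  assert (J_0 : J 0%nat = 0%nat) by reflexivity.
  assert (J_S : forall i, J (S i) = step (J i)) by reflexivity.
  assert (J_lt_S : forall i, (J i < J (S i))%nat)
    by (intros i; rewrite J_S; unfold step; lia).
  assert (J_convex : forall i, (J (S i) + J (S i) <= J i + J (S (S i)))%nat)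
    by (intros i; rewrite (J_S (S i)); unfold step; lia).
  assert (J_fast : forall i m, (J (S (S i)) <= m)%nat ->
                     exp (INR (J (S i))) <= INR (count_upto K m)).
  { intros i m Hm. apply (count_threshold_spec K HK). rewrite J_S in Hm. unfold step in Hm. lia. }
  pose proof (interp_monotone_Lipschitz J J_lt_S J_convex) as Hlip.
  assert (Hlt : forall x y, 0 <= x -> x < y -> interp J x < interp J y)
    by (intros x y _; apply interp_lt; assumption).
  exists (comp_ln1p (interp J)). split; [|split; [|split; [|split]]].
  - exact (comp_ln1p_modulus _ _ Hlt Hlip
             (interp_concave J J_lt_S J_convex) (interp_0 J J_lt_S J_0)).
  - exact (comp_ln1p_unbounded _ (interp_unbounded J J_lt_S J_0)).
  - exact (comp_ln1p_concave _ _ Hlip (interp_concave J J_lt_S J_convex)).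
  - exact (comp_ln1p_slowly_varying _ _ Hlip (interp_unbounded J J_lt_S J_0)).
  - exact (interp_ln1p_density J J_lt_S J_convex J_0 K J_fast).
Qed.
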